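(* Let $c\ge 0$ be a constant integer and let $f:\{0,1\}^n\to\{0,1\}^{n+c}$ be computable by polynomial-size circuits. Let $T_1(n)=\{x\in\{0,1\}^n: |f^{-1}(f(x))|=1\}$. If there exist a polynomial $p$ and infinitely many $n$ such that $$\frac{|T_1(n)|}{2^n}\ \ge\ \frac{2^{1+c}}{2^{1+c}+1}+\frac{1}{p(n)},$$ then $f$ does not have a super-core. In particular, for length-preserving $f$ ($c=0$) the condition reads $|T_1(n)|/2^n\ge 2/3+1/p(n)$.
   Context: A predicate $b$ computable by polynomial-size circuits is a super-core of $f:\{0,1\}^n\to\{0,1\}^{m(n)}$ if there do not exist a nondeterministic polynomial-size circuit family $\mathcal{A}_1$ (accepting iff some witness gives output 1), a co-nondeterministic polynomial-size circuit family $\mathcal{A}_2$ (rejecting iff some witness gives output 0), a polynomial $p$ and infinitely many $n$ such that either $\Pr_{x\in\{0,1\}^n}[\mathcal{A}_1(f(x),1^n)=b(x)=0]+\tfrac12\Pr_{y\in\{0,1\}^{m(n)}}[\mathcal{A}_1(y,1^n)=1]\ge \tfrac12+\tfrac1{p(n)}$ or $\Pr_{x}[\mathcal{A}_2(f(x),1^n)=b(x)=1]+\tfrac12\Pr_{y}[\mathcal{A}_2(y,1^n)=0]\ge \tfrac12+\tfrac1{p(n)}$ (uniform distributions). *)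

From HB Require Import structures.
From mathcomp Require Import all_boot all_order all_algebra.
Set Implicit Arguments. Unset Strict Implicit. Unset Printing Implicit Defensive.
Import Order.TTheory GRing.Theory Num.Theory.
Local Open Scope ring_scope.

(* Wires are numbered: first the inputs 0..k-1, then gate g_j gets wire k+j.
   A gate may only read wires already computed (out-of-range wires read false). *)
Inductive gate := GAnd of nat & nat | GOr of nat & nat | GNot of nat | GConst of bool.

Record circuit := Circuit { gates : seq gate; outs : seq nat }.

Definition eval_gate (w : seq bool) (g : gate) : bool :=
  match g with
  | GAnd i j => nth false w i && nth false w j
  | GOr i j => nth false w i || nth false w j
  | GNot i => ~~ nth false w i
  | GConst b => b
  end.

Definition wires (inp : seq bool) (gs : seq gate) : seq bool :=
  foldl (fun w g => rcons w (eval_gate w g)) inp gs.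

Definition eval (C : circuit) (inp : seq bool) : seq bool :=
  map (nth false (wires inp (gates C))) (outs C).

Definition csize (C : circuit) : nat := size (gates C).

Definition bits (n : nat) := n.-tuple bool.

Definition pos_poly (p : {poly rat}) : Prop := forall n : nat, 0 < p.[n%:R].

Definition poly_size_computable (m : nat -> nat)
    (f : forall n, bits n -> bits (m n)) : Prop :=
  exists q : {poly rat}, forall n, exists C : circuit,
    (csize C)%:R <= q.[n%:R] /\ forall x : bits n, eval C x = val (f n x).

Definition poly_size_pred (b : forall n, bits n -> bool) : Prop :=
  exists q : {poly rat}, forall n, exists C : circuit,
    (csize C)%:R <= q.[n%:R] /\ forall x : bits n, eval C x = [:: b n x].

(* A family of (witness-taking) polynomial-size circuits with one output bit,
   reading an input of length m(n) followed by a witness of length wl(n). *)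
Definition poly_size_witness_family (A : nat -> circuit) (wl : nat -> nat) : Prop :=
  exists q : {poly rat}, forall n,
    (csize (A n))%:R <= q.[n%:R] /\ (wl n)%:R <= q.[n%:R] /\ size (outs (A n)) = 1.

Definition ndet_out (A : nat -> circuit) (wl : nat -> nat) (n : nat) (y : seq bool) : bool :=
  [exists w : bits (wl n), eval (A n) (y ++ val w) == [:: true]].

Definition condet_out (A : nat -> circuit) (wl : nat -> nat) (n : nat) (y : seq bool) : bool :=
  ~~ [exists w : bits (wl n), eval (A n) (y ++ val w) == [:: false]].

Definition prob (n : nat) (P : pred (bits n)) : rat := #|[set x | P x]|%:R / (2 ^ n)%:R.

Definition infinitely_often (P : nat -> Prop) : Prop := forall N, exists n : nat, (N <= n)%N /\ P n.

Definition super_core (m : nat -> nat) (f : forall n, bits n -> bits (m n))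
    (b : forall n, bits n -> bool) : Prop :=
  poly_size_pred b /\
  ~ exists (A1 : nat -> circuit) (wl1 : nat -> nat)
           (A2 : nat -> circuit) (wl2 : nat -> nat) (p : {poly rat}),
      [/\ poly_size_witness_family A1 wl1, poly_size_witness_family A2 wl2,
          pos_poly p &
          infinitely_often (fun n =>
            (prob [pred x | ~~ ndet_out A1 wl1 n (val (f n x)) && ~~ b n x]
               + 2%:R^-1 * prob [pred y : bits (m n) | ndet_out A1 wl1 n (val y)]
             >= 2%:R^-1 + (p.[n%:R])^-1)
            \/
            (prob [pred x | condet_out A2 wl2 n (val (f n x)) && b n x]
               + 2%:R^-1 * prob [pred y : bits (m n) | ~~ condet_out A2 wl2 n (val y)]
             >= 2%:R^-1 + (p.[n%:R])^-1))].

Definition T1 (m : nat -> nat) (f : forall n, bits n -> bits (m n)) (n : nat) : {set bits n} :=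
  [set x | #|[set x' | f n x' == f n x]| == 1%N].

From mathcomp Require Import all_boot all_order all_algebra.
From mathcomp Require Import zify ring lra.
From Stdlib Require IndefiniteDescription.
Import Order.TTheory GRing.Theory Num.Theory.

(* Given circuits Cf for f and Cb for b, the two attackers take a witness w of length n:
   A1 accepts y iff some w has f w = y and b w = 1, and the co-nondeterministic A2 rejects
   y iff some w has f w = y and b w = 0.  For x with a unique preimage, A1 rejects f x when
   b x = 0, and the images of those with b x = 1 are accepted; being injective there, f
   gives them weight 1/K in the uniform measure on {0,1}^(n+c).  With u and v the
   fractions of unique-preimage inputs with b = 0 and b = 1, the two scores of the
   super-core definition are at least u + v/K and v + u/K, and since
   u + v >= K/(K+1) + 1/p, one of them reaches 1/2 + 1/(2p). *)

Lemma wires_cat (inp : seq bool) (gs1 gs2 : seq gate) :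
  wires inp (gs1 ++ gs2) = wires (wires inp gs1) gs2.
Proof. by rewrite /wires foldl_cat. Qed.

Lemma wires_rcons (inp : seq bool) (gs : seq gate) (g : gate) :
  wires inp (rcons gs g) = rcons (wires inp gs) (eval_gate (wires inp gs) g).
Proof. by rewrite /wires foldl_rcons. Qed.

Lemma size_wires (inp : seq bool) (gs : seq gate) :
  size (wires inp gs) = (size inp + size gs)%N.
Proof.
elim/last_ind: gs => [|gs g IH]; first by rewrite addn0.
by rewrite wires_rcons !size_rcons IH addnS.
Qed.

Lemma wires_prefix (inp : seq bool) (gs : seq gate) :
  exists e, wires inp gs = inp ++ e.
Proof.
elim/last_ind: gs => [|gs g [e IH]]; first by exists [::]; rewrite cats0.
by exists (rcons e (eval_gate (wires inp gs) g)); rewrite wires_rcons IH rcons_cat.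
Qed.

Lemma nth_wires (inp : seq bool) (gs : seq gate) (i : nat) :
  (i < size inp)%N -> nth false (wires inp gs) i = nth false inp i.
Proof. by case: (wires_prefix inp gs) => e -> hi; rewrite nth_cat hi. Qed.

(** A circuit with [k] inputs is
    re-wired so that its inputs are read at positions [off, off + k) of an
    existing wire list of size [base], and its internal wires follow [base]. *)

Definition rel_idx (k off base i : nat) : nat :=
  if (i < k)%N then (off + i)%N else (base + (i - k))%N.

Definition rel_gate (k off base : nat) (g : gate) : gate :=
  match g with
  | GAnd i j => GAnd (rel_idx k off base i) (rel_idx k off base j)
  | GOr i j => GOr (rel_idx k off base i) (rel_idx k off base j)
  | GNot i => GNot (rel_idx k off base i)
  | GConst b => GConst b
  end.

Section Relocation.
Variables (k off : nat) (W inp : seq bool).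
Hypothesis size_inp : size inp = k.
Hypothesis size_W : (off + k <= size W)%N.
Hypothesis W_inp : forall i, (i < k)%N -> nth false W (off + i) = nth false inp i.

Lemma nth_rel (X : seq bool) (i : nat) :
  (exists e, X = inp ++ e) ->
  nth false (W ++ drop k X) (rel_idx k off (size W) i) = nth false X i.
Proof.
move=> [e ->]; rewrite /rel_idx; case: ifP => hi.
  rewrite nth_cat ifT; last by apply: leq_trans size_W; rewrite ltn_add2l.
  by rewrite W_inp // nth_cat size_inp hi.
rewrite nth_cat ltnNge leq_addr /= addKn nth_drop subnKC //.
by rewrite leqNgt hi.
Qed.

Lemma wires_rel (gs : seq gate) :
  wires W (map (rel_gate k off (size W)) gs) = W ++ drop k (wires inp gs).
Proof.
elim/last_ind: gs => [|gs g IH].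
  by rewrite /= /wires /= drop_oversize ?cats0 // size_inp.
rewrite map_rcons !wires_rcons IH drop_rcons; last by rewrite size_wires size_inp leq_addr.
rewrite rcons_cat; congr (_ ++ rcons _ _).
have He := wires_prefix inp gs.
by case: g => [i j|i j|i|b] /=; rewrite ?(nth_rel _ _ He).
Qed.

End Relocation.

(* The wire carrying output [o] of a relocated circuit with [sz] gates; an output index
   past the end of the original wire list reads [false], so it is sent to a wire [zero]
   known to hold [false]. *)
Definition out_wire (k off base sz zero o : nat) : nat :=
  if (o < k + sz)%N then rel_idx k off base o else zero.

Lemma nth_out_wire (k off : nat) (W inp e : seq bool) (gs : seq gate) (zero o : nat) :
  size inp = k -> (off + k <= size W)%N ->
  (forall i, (i < k)%N -> nth false W (off + i) = nth false inp i) ->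
  let Y := W ++ drop k (wires inp gs) ++ e in
  nth false Y zero = false ->
  nth false Y (out_wire k off (size W) (size gs) zero o) = nth false (wires inp gs) o.
Proof.
move=> hk hW hWi Y hzero; rewrite /out_wire; case: ifP => ho; last first.
  by rewrite hzero nth_default // size_wires hk leqNgt ho.
rewrite /Y catA nth_cat ifT; first exact/nth_rel/wires_prefix.
rewrite size_cat size_drop size_wires hk /rel_idx; case: ifP => hi; lia.
Qed.

Lemma out_wire_lt (k off base sz zero o bound : nat) :
  (off + k <= bound)%N -> (base + sz <= bound)%N -> (zero < bound)%N ->
  (out_wire k off base sz zero o < bound)%N.
Proof. by rewrite /out_wire /rel_idx; case: ifP => h1; try case: ifP => h2; lia. Qed.

(** An equality tester: placed at wire position [s], the gates [cmp s acc xs ys]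
    compute the conjunction of wire [acc] with [xs_i == ys_i] for all [i]
    (six gates per compared pair), the result being on wire [cmp_out s acc xs ys]. *)

Fixpoint cmp (s acc : nat) (xs ys : seq nat) : seq gate :=
  match xs, ys with
  | a :: xs1, b :: ys1 =>
      [:: GNot a; GNot b; GAnd a b; GAnd s (s + 1); GOr (s + 2) (s + 3); GAnd acc (s + 4)]
        ++ cmp (s + 6) (s + 5) xs1 ys1
  | _, _ => [::]
  end.

Fixpoint cmp_out (s acc : nat) (xs ys : seq nat) : nat :=
  match xs, ys with
  | a :: xs1, b :: ys1 => cmp_out (s + 6) (s + 5) xs1 ys1
  | _, _ => acc
  end.

Lemma size_cmp (s acc : nat) (xs ys : seq nat) :
  size (cmp s acc xs ys) = (6 * minn (size xs) (size ys))%N.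
Proof.
elim: xs ys s acc => [|a xs IH] [|b ys] s acc /=; rewrite ?min0n ?minn0 //.
by rewrite IH minnSS mulnS.
Qed.

Lemma map_nth_cat (W e : seq bool) (xs : seq nat) :
  all (fun a => a < size W)%N xs ->
  map (nth false (W ++ e)) xs = map (nth false W) xs.
Proof. by move=> /allP xsW; apply/eq_in_map => i /xsW hi; rewrite nth_cat hi. Qed.

Lemma cmp_spec (xs ys : seq nat) (s acc : nat) (W : seq bool) :
  size xs = size ys -> size W = s -> (acc < s)%N ->
  all (fun a => a < s)%N xs -> all (fun a => a < s)%N ys ->
  nth false (wires W (cmp s acc xs ys)) (cmp_out s acc xs ys)
  = nth false W acc && (map (nth false W) xs == map (nth false W) ys).
Proof.
elim: xs ys s acc W => [|a xs IH] [|b ys] s acc W //.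
  by move=> _ _ _ _ _; rewrite andbT.
move=> [hsz] hs hacc /andP[ha hx] /andP[hb hy].
rewrite /cmp -/cmp /cmp_out -/cmp_out wires_cat.
set eqab := (nth false W a && nth false W b) || (~~ nth false W a && ~~ nth false W b).
set W1 := wires W _.
have W1E : W1 = W ++ [:: ~~ nth false W a; ~~ nth false W b;
     nth false W a && nth false W b; ~~ nth false W a && ~~ nth false W b;
     eqab; nth false W acc && eqab].
  rewrite /W1 /wires /= -!cats1 -!catA /=.
  by rewrite !nth_cat /= hs ha hb hacc ltnn subnn !(ltnNge (s + _) s) !leq_addr !addKn.
have sizeW1 : size W1 = (s + 6)%N by rewrite W1E size_cat hs.
have widen l : all (fun a => a < s)%N l -> all (fun a => a < s + 6)%N l.
  by apply: sub_all => i /= hi; apply: leq_trans hi (leq_addr _ _).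
rewrite IH // ?widen //; last by rewrite ltn_add2l.
rewrite W1E !map_nth_cat ?hs // nth_cat hs ltnNge leq_addr /= addKn /= eqseq_cons /eqab.
by case: (nth false W a); case: (nth false W b); case: (nth false W acc).
Qed.

(** Given circuits [Cf] for [f : {0,1}^n -> {0,1}^m] and [Cb]
    for [b], on input [y ++ w] (|y| = m, |w| = n) the wires are laid out as: the input,
    the constants [false] (at [zero_wire]) and [true] (at [one_wire]), the relocated gates
    of [Cf] and of [Cb] run on [w], the negation of [b w] (at [notb_wire]), and finally an
    equality tester comparing [y] with [f w] (result at [eq_wire]). *)

Section Verifier.
Variables (n c : nat) (Cf Cb : circuit).
Local Notation m := (n + c)%N.

Definition zero_wire : nat := (m + n)%N.
Definition one_wire : nat := zero_wire.+1.
Definition f_base : nat := (zero_wire + 2)%N.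
Definition b_base : nat := (f_base + size (gates Cf))%N.
Definition notb_wire : nat := (b_base + size (gates Cb))%N.

Definition f_wires : seq nat := map (out_wire n m f_base (size (gates Cf)) zero_wire) (outs Cf).
Definition b_wire : nat := out_wire n m b_base (size (gates Cb)) zero_wire (head 0%N (outs Cb)).

Definition layout_gates : seq gate :=
  [:: GConst false; GConst true] ++ map (rel_gate n m f_base) (gates Cf)
  ++ map (rel_gate n m b_base) (gates Cb).

Definition layout (y w : seq bool) : seq bool :=
  (y ++ w ++ [:: false; true]) ++ drop n (wires w (gates Cf)) ++ drop n (wires w (gates Cb)).

Definition eq_gates : seq gate := cmp notb_wire.+1 one_wire (iota 0 m) f_wires.
Definition eq_wire : nat := cmp_out notb_wire.+1 one_wire (iota 0 m) f_wires.
Definition body_gates : seq gate := layout_gates ++ GNot b_wire :: eq_gates.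
Definition top_wire : nat := (m + n + size body_gates)%N.

(* Outputs [(y == f w) && b w]. *)
Definition verifier : circuit :=
  Circuit (rcons body_gates (GAnd eq_wire b_wire)) [:: top_wire].

(* Outputs [~~ ((y == f w) && ~~ b w)]. *)
Definition coverifier : circuit :=
  Circuit (body_gates ++ [:: GAnd eq_wire notb_wire; GNot top_wire]) [:: top_wire.+1].

Lemma size_body_gates : (size body_gates <= 3 + size (gates Cf) + size (gates Cb) + 6 * m)%N.
Proof.
rewrite /body_gates /layout_gates /eq_gates !size_cat /= !size_map size_cmp size_iota.
by have := geq_minl m (size f_wires); lia.
Qed.

Variables (y w : seq bool).
Hypotheses (size_y : size y = m) (size_w : size w = n).

Let U := y ++ w ++ [:: false; true].
Let Xf := wires w (gates Cf).
Let Xb := wires w (gates Cb).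

Let size_U : size U = f_base.
Proof. by rewrite /U !size_cat size_y size_w addnA. Qed.

Let U_w (i : nat) : (i < n)%N -> nth false U (m + i) = nth false w i.
Proof. by move=> hi; rewrite /U nth_cat size_y ltnNge leq_addr /= addKn nth_cat size_w hi. Qed.

Let size_UXf : size (U ++ drop n Xf) = b_base.
Proof. by rewrite size_cat size_drop size_U size_wires size_w /b_base; lia. Qed.

Let UXf_w (i : nat) : (i < n)%N -> nth false (U ++ drop n Xf) (m + i) = nth false w i.
Proof. by move=> hi; rewrite nth_cat size_U ifT ?U_w // /f_base /zero_wire; lia. Qed.

Lemma wires_layout : wires (y ++ w) layout_gates = layout y w.
Proof.
have wires_consts : wires (y ++ w) [:: GConst false; GConst true] = U.
  by rewrite /wires /= -!cats1 -!catA.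
rewrite /layout_gates !wires_cat wires_consts -size_U (wires_rel _ _ _ _ size_w _ U_w);
  last by rewrite size_U /f_base /zero_wire; lia.
rewrite -size_UXf (wires_rel _ _ _ _ size_w _ UXf_w); first exact: esym (catA _ _ _).
by rewrite size_UXf /b_base /f_base /zero_wire; lia.
Qed.

Lemma size_layout : size (layout y w) = notb_wire.
Proof.
by rewrite /layout catA size_cat size_UXf size_drop size_wires size_w /notb_wire; lia.
Qed.

Lemma nth_layout_input (i : nat) : (i < f_base)%N -> nth false (layout y w) i = nth false U i.
Proof. by move=> hi; rewrite /layout nth_cat size_U hi. Qed.

Let U_consts (i : nat) : nth false U (m + n + i) = nth false [:: false; true] i.
Proof. by rewrite /U catA nth_cat size_cat size_y size_w ltnNge leq_addr /= addKn. Qed.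

Lemma layout_zero : nth false (layout y w) zero_wire = false.
Proof.
rewrite nth_layout_input; last by rewrite /f_base /zero_wire; lia.
by rewrite /zero_wire -[m + n]addn0 U_consts.
Qed.

Lemma layout_one : nth false (layout y w) one_wire = true.
Proof.
rewrite nth_layout_input; last by rewrite /one_wire /f_base /zero_wire; lia.
by rewrite /one_wire /zero_wire -addn1 U_consts.
Qed.

Lemma layout_y (i : nat) : (i < m)%N -> nth false (layout y w) i = nth false y i.
Proof.
move=> hi; rewrite nth_layout_input; last by rewrite /f_base /zero_wire; lia.
by rewrite /U nth_cat size_y hi.
Qed.

Lemma layout_f (o : nat) :
  nth false (layout y w) (out_wire n m f_base (size (gates Cf)) zero_wire o) = nth false Xf o.
Proof.
rewrite -size_U nth_out_wire // ?size_U ?layout_zero //.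
by rewrite /f_base /zero_wire; lia.
Qed.

Lemma layout_b (o : nat) :
  nth false (layout y w) (out_wire n m b_base (size (gates Cb)) zero_wire o) = nth false Xb o.
Proof.
have layoutE : layout y w = (U ++ drop n Xf) ++ drop n Xb ++ [::].
  by rewrite cats0; exact: catA.
rewrite layoutE -size_UXf nth_out_wire //.
  by rewrite size_UXf /b_base /f_base /zero_wire; lia.
by rewrite -layoutE layout_zero.
Qed.

Variables (fw : seq bool) (bw : bool).
Hypotheses (eval_f : eval Cf w = fw) (size_fw : size fw = m) (eval_b : eval Cb w = [:: bw]).

Lemma layout_b_wire : nth false (layout y w) b_wire = bw.
Proof.
by move: eval_b; rewrite /eval /b_wire layout_b; case: (outs Cb) => [|ob [|? ?]] //= [].
Qed.

Lemma layout_f_wires : map (nth false (layout y w)) f_wires = fw.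
Proof. by rewrite -eval_f /f_wires -map_comp; apply: eq_map => o; rewrite /= layout_f. Qed.

Lemma b_wire_lt : (b_wire < notb_wire)%N.
Proof. by apply: out_wire_lt; rewrite /notb_wire /b_base /f_base /zero_wire; lia. Qed.

Lemma f_wires_lt : all (fun a => a < notb_wire)%N f_wires.
Proof.
apply/allP => _ /mapP [o _ ->].
by apply: out_wire_lt; rewrite /notb_wire /b_base /f_base /zero_wire; lia.
Qed.

Let Wn := rcons (layout y w) (~~ bw).
Let B := wires (y ++ w) body_gates.

Let size_Wn : size Wn = notb_wire.+1.
Proof. by rewrite size_rcons size_layout. Qed.

Let BE : B = wires Wn eq_gates.
Proof. by rewrite /B /body_gates wires_cat wires_layout /= /wires /= layout_b_wire. Qed.

Let B_prefix (i : nat) : (i <= notb_wire)%N -> nth false B i = nth false Wn i.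
Proof. by move=> hi; rewrite BE nth_wires // size_Wn. Qed.

Lemma body_b_wire : nth false B b_wire = bw.
Proof.
by rewrite B_prefix ?(ltnW b_wire_lt) // /Wn nth_rcons size_layout b_wire_lt layout_b_wire.
Qed.

Lemma body_notb_wire : nth false B notb_wire = ~~ bw.
Proof. by rewrite B_prefix // /Wn nth_rcons size_layout ltnn eqxx. Qed.

Lemma body_eq_wire : nth false B eq_wire = (y == fw).
Proof.
have size_f_wires : size f_wires = m.
  by rewrite -size_fw -eval_f /f_wires /eval !size_map.
have iota_lt : all (fun a => a < notb_wire)%N (iota 0 m).
  by apply/allP => i; rewrite mem_iota /notb_wire /b_base /f_base /zero_wire; lia.
have widen l : all (fun a => a < notb_wire)%N l -> all (fun a => a < notb_wire.+1)%N l.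
  by apply: sub_all => i /= /ltnW.
rewrite BE /eq_wire cmp_spec ?size_iota ?size_f_wires ?widen ?f_wires_lt //; last first.
  by rewrite /one_wire /notb_wire /b_base /f_base /zero_wire; lia.
have one_lt : (one_wire < size (layout y w))%N.
  by rewrite size_layout /one_wire /notb_wire /b_base /f_base /zero_wire; lia.
rewrite /Wn -cats1 !(map_nth_cat (layout y w)) ?size_layout ?f_wires_lt //.
rewrite nth_cat one_lt layout_one layout_f_wires.
congr (_ == fw); rewrite -[RHS](mkseq_nth false) size_y.
by apply/eq_in_map => i; rewrite mem_iota => /andP [_ hi]; apply: layout_y.
Qed.

Let size_B : size B = top_wire.
Proof. by rewrite /B size_wires size_cat size_y size_w. Qed.

Lemma eval_verifier : eval verifier (y ++ w) = [:: (y == fw) && bw].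
Proof.
rewrite /eval /= wires_rcons -/B /= nth_rcons size_B ltnn eqxx.
by rewrite body_eq_wire body_b_wire.
Qed.

Lemma eval_coverifier : eval coverifier (y ++ w) = [:: ~~ ((y == fw) && ~~ bw)].
Proof.
rewrite /eval /= -[[:: _; _]]/([:: _] ++ [:: _]) catA !cats1 !wires_rcons -/B /=.
rewrite !nth_rcons !size_rcons size_B ltnn eqxx /= ltnn eqxx.
by rewrite body_eq_wire body_notb_wire.
Qed.

End Verifier.

Arguments eval_verifier {n c Cf Cb y w} size_y size_w {fw bw} eval_f size_fw eval_b.
Arguments eval_coverifier {n c Cf Cb y w} size_y size_w {fw bw} eval_f size_fw eval_b.

Local Open Scope ring_scope.

Lemma prob_eq (n : nat) (P Q : pred (bits n)) : P =1 Q -> prob P = prob Q.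
Proof. by move=> PQ; rewrite /prob; congr (_%:R / _); apply: eq_card => x; rewrite !inE PQ. Qed.

Lemma prob_ge (n : nat) (P : pred (bits n)) (A : {set bits n}) :
  A \subset [set x | P x] -> #|A|%:R / (2 ^ n)%:R <= prob P.
Proof.
move=> AP; rewrite /prob ler_wpM2r ?invr_ge0 ?ler0n // ler_nat.
exact: subset_leq_card.
Qed.

Section UniquePreimages.
Variables (n m : nat) (F : bits n -> bits m).

Definition unique_preimages : {set bits n} := [set x | #|[set x' | F x' == F x]| == 1%N].

Definition hits (P : pred (bits n)) (y : bits m) : bool := [exists w, (F w == y) && P w].

Lemma unique_preimagesP {x x' : bits n} :
  x \in unique_preimages -> F x' = F x -> x' = x.
Proof.
rewrite inE => /cards1P [z hz] Fx'.
have : x \in [set x'' | F x'' == F x] by rewrite inE.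
have : x' \in [set x'' | F x'' == F x] by rewrite inE Fx'.
by rewrite hz !inE => /eqP -> /eqP ->.
Qed.

Variable (P : pred (bits n)).

Lemma misses_ge :
  #|[set x in unique_preimages | ~~ P x]|%:R / (2 ^ n)%:R
  <= prob [pred x | ~~ hits P (F x) && ~~ P x].
Proof.
apply: prob_ge; apply/subsetP => x; rewrite inE => /andP [ux nPx].
rewrite inE /= nPx andbT; apply/existsP => [[w /andP [/eqP Fw Pw]]].
by move: nPx; rewrite -(unique_preimagesP ux Fw) Pw.
Qed.

(* [F] is injective on unique preimages, so those satisfying [P] give as many hits. *)
Lemma hits_ge :
  #|[set x in unique_preimages | P x]|%:R / (2 ^ m)%:R <= prob [pred y | hits P y].
Proof.
set A := [set x in unique_preimages | P x].
have injF : {in A &, injective F}.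
  by move=> x x'; rewrite inE => /andP [ux _] _ /esym /(unique_preimagesP ux).
rewrite -(card_in_imset injF); apply: prob_ge; apply/subsetP => _ /imsetP [x Ax ->].
by rewrite !inE; apply/existsP; exists x; rewrite eqxx; move: Ax; rewrite inE => /andP [].
Qed.

End UniquePreimages.

Arguments unique_preimages {n m} F.
Arguments hits {n m} F P y.

(* The score of an exact tester [acc] for [hits F P], with [K = 2 ^ (1 + c)]: unique
   preimages outside [P] count fully in the first term, and the images of those inside
   [P], measured in [{0,1}^(n+c)] and halved, count with weight [1/K]. *)
Lemma hits_advantage (n c : nat) (F : bits n -> bits (n + c)) (P : pred (bits n))
    (acc : pred (bits (n + c))) :
  acc =1 hits F P ->
  #|[set x in unique_preimages F | ~~ P x]|%:R / (2 ^ n)%:R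
    + #|[set x in unique_preimages F | P x]|%:R / (2 ^ n)%:R / (2 ^ (1 + c))%:R
  <= prob [pred x | ~~ acc (F x) && ~~ P x] + 2%:R^-1 * prob [pred y | acc y].
Proof.
move=> accE.
rewrite (@prob_eq _ [pred x | ~~ acc (F x) && ~~ P x] [pred x | ~~ hits F P (F x) && ~~ P x]);
  last by move=> x /=; rewrite accE.
rewrite (@prob_eq _ [pred y | acc y] [pred y | hits F P y]) //.
apply: lerD; first exact: misses_ge.
set d := #|_|%:R.
have -> : d / (2 ^ n)%:R / (2 ^ (1 + c))%:R = 2%:R^-1 * (d / (2 ^ (n + c))%:R).
  by rewrite !expnD !natrM expn1; field; rewrite !pnatr_eq0 !expn_eq0.
by rewrite ler_wpM2l ?invr_ge0 ?ler0n //; apply: hits_ge.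
Qed.

Lemma cohits_advantage (n c : nat) (F : bits n -> bits (n + c)) (P : pred (bits n))
    (rej : pred (bits (n + c))) :
  (forall y, ~~ rej y = hits F (fun x => ~~ P x) y) ->
  #|[set x in unique_preimages F | P x]|%:R / (2 ^ n)%:R
    + #|[set x in unique_preimages F | ~~ P x]|%:R / (2 ^ n)%:R / (2 ^ (1 + c))%:R
  <= prob [pred x | rej (F x) && P x] + 2%:R^-1 * prob [pred y | ~~ rej y].
Proof.
move=> rejE; have := @hits_advantage n c F (fun x => ~~ P x) [pred y | ~~ rej y] rejE.
have -> : #|[set x in unique_preimages F | ~~ ~~ P x]| = #|[set x in unique_preimages F | P x]|.
  by apply: eq_card => x; rewrite !inE negbK.
by rewrite (@prob_eq _ _ [pred x | rej (F x) && P x]) // => x /=; rewrite !negbK.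
Qed.

Lemma one_half_advantage (R : realFieldType) (S1 S2 u v K P : R) : 0 < K -> 0 < P ->
  u + v / K <= S1 -> v + u / K <= S2 -> K / (K + 1) + P^-1 <= u + v ->
  2%:R^-1 + (P *+ 2)^-1 <= S1 \/ 2%:R^-1 + (P *+ 2)^-1 <= S2.
Proof.
move=> K_gt0 P_gt0 uvS1 vuS2 uv_ge.
have iK_gt0 : 0 < K^-1 by rewrite invr_gt0.
have iP_gt0 : 0 < P^-1 by rewrite invr_gt0.
have sumE : (u + v) * (1 + K^-1) = u + v + u / K + v / K by ring.
have boundE : (K / (K + 1) + P^-1) * (1 + K^-1) = 1 + P^-1 + P^-1 / K.
  by field; rewrite !gt_eqF // ltr_wpDr // ltW.
have halfE : (P *+ 2)^-1 = P^-1 / 2 by rewrite -[in LHS]mulr_natr invfM.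
have scaled : (K / (K + 1) + P^-1) * (1 + K^-1) <= (u + v) * (1 + K^-1).
  by rewrite ler_wpM2r // ltW // ltr_wpDr // ltW.
have : 0 <= P^-1 / K by rewrite divr_ge0 // ltW.
rewrite halfE; lra.
Qed.

Lemma witness_family_poly (c : nat) (A Cf Cb : nat -> circuit) (qf qb : {poly rat}) :
  (forall n, (csize (Cf n))%:R <= qf.[n%:R]) -> (forall n, (csize (Cb n))%:R <= qb.[n%:R]) ->
  (forall n, csize (A n) <= 5 + csize (Cf n) + csize (Cb n) + 6 * (n + c))%N ->
  (forall n, size (outs (A n)) = 1%N) ->
  poly_size_witness_family A id.
Proof.
move=> Cf_q Cb_q A_size A_outs.
set q := qf + qb + ('X + (c%:R : rat)%:P) *+ 6 + (5%:R : rat)%:P.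
exists q => n.
have bound k : (k <= 5 + csize (Cf n) + csize (Cb n) + 6 * (n + c))%N -> (k%:R : rat) <= q.[n%:R].
  rewrite -(ler_nat rat) => /le_trans; apply.
  rewrite /q !hornerD !hornerX !hornerC natrD natrM !natrD.
  by have := Cf_q n; have := Cb_q n; lra.
by split; [|split]; rewrite ?A_outs //; apply: bound; rewrite ?A_size //; lia.
Qed.

Section Attackers.
Variables (c : nat) (Cf Cb : nat -> circuit).
Variables (f : forall n, bits n -> bits (n + c)) (b : forall n, bits n -> bool).
Hypothesis Cf_f : forall n (x : bits n), eval (Cf n) x = val (f n x).
Hypothesis Cb_b : forall n (x : bits n), eval (Cb n) x = [:: b n x].

Definition attacker1 (n : nat) : circuit := verifier n c (Cf n) (Cb n).
Definition attacker2 (n : nat) : circuit := coverifier n c (Cf n) (Cb n).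

Lemma attacker1E (n : nat) (y : bits (n + c)) :
  ndet_out attacker1 id n (val y) = hits (f n) (b n) y.
Proof.
apply: eq_existsb => w.
rewrite (eval_verifier (size_tuple y) (size_tuple w) (Cf_f _ w) (size_tuple _) (Cb_b _ w)).
by rewrite eqseq_cons andbT eqb_id val_eqE eq_sym.
Qed.

Lemma attacker2E (n : nat) (y : bits (n + c)) :
  ~~ condet_out attacker2 id n (val y) = hits (f n) (fun x => ~~ b n x) y.
Proof.
rewrite negbK; apply: eq_existsb => w.
rewrite (eval_coverifier (size_tuple y) (size_tuple w) (Cf_f _ w) (size_tuple _) (Cb_b _ w)).
by rewrite eqseq_cons andbT eqbF_neg negbK val_eqE eq_sym.
Qed.

Lemma attacker1_size (n : nat) :
  (csize (attacker1 n) <= 5 + csize (Cf n) + csize (Cb n) + 6 * (n + c))%N.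
Proof. by rewrite /csize size_rcons; have := size_body_gates n c (Cf n) (Cb n); lia. Qed.

Lemma attacker2_size (n : nat) :
  (csize (attacker2 n) <= 5 + csize (Cf n) + csize (Cb n) + 6 * (n + c))%N.
Proof.
by rewrite /csize size_cat [size [:: _; _]]/=; have := size_body_gates n c (Cf n) (Cb n); lia.
Qed.

End Attackers.

Lemma card_unique_preimages_split (n m : nat) (F : bits n -> bits m) (P : pred (bits n)) :
  (#|[set x in unique_preimages F | ~~ P x]| + #|[set x in unique_preimages F | P x]|)%N
  = #|unique_preimages F|.
Proof.
rewrite -(cardsID [set x | P x] (unique_preimages F)) addnC.
by congr (_ + _)%N; apply: eq_card => x; rewrite !inE // andbC.
Qed.

Theorem theorem6p7 (c : nat) (f : forall n, bits n -> bits (n + c)%N) :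
  @poly_size_computable (fun n => (n + c)%N) f ->
  (exists p : {poly rat}, pos_poly p /\
     infinitely_often (fun n =>
       #|@T1 (fun n => (n + c)%N) f n|%:R / (2 ^ n)%:R >=
       (2 ^ (1 + c))%:R / ((2 ^ (1 + c))%:R + 1) + (p.[n%:R])^-1)) ->
  ~ exists b : forall n, bits n -> bool, @super_core (fun n => (n + c)%N) f b.
Proof.
move=> [qf hqf] [p [p_pos often]] [b [[qb hqb] no_attack]]; apply: no_attack.
have [Cf Cf_spec] := IndefiniteDescription.functional_choice _ hqf.
have [Cb Cb_spec] := IndefiniteDescription.functional_choice _ hqb.
have Cf_f n (x : bits n) : eval (Cf n) x = val (f n x) by case: (Cf_spec n) => _ ->.
have Cb_b n (x : bits n) : eval (Cb n) x = [:: b n x] by case: (Cb_spec n) => _ ->.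
have Cf_q n : (csize (Cf n))%:R <= qf.[n%:R] by case: (Cf_spec n).
have Cb_q n : (csize (Cb n))%:R <= qb.[n%:R] by case: (Cb_spec n).
exists (attacker1 c Cf Cb), id, (attacker2 c Cf Cb), id, (p *+ 2); split.
- by apply: witness_family_poly Cf_q Cb_q (attacker1_size c Cf Cb) _.
- by apply: witness_family_poly Cf_q Cb_q (attacker2_size c Cf Cb) _.
- by move=> n; rewrite hornerMn pmulrn_lgt0.
move=> N; have [n [Nn T1_large]] := often N; exists n; split => //.
set U := unique_preimages (f n).
rewrite hornerMn; apply: (@one_half_advantage _ _ _
  (#|[set x in U | ~~ b n x]|%:R / (2 ^ n)%:R) (#|[set x in U | b n x]|%:R / (2 ^ n)%:R)
  (2 ^ (1 + c))%:R).
- by rewrite ltr0n expn_gt0.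
- exact: p_pos.
- exact: hits_advantage (attacker1E _ _ _ _ _ Cf_f Cb_b n).
- exact: cohits_advantage (attacker2E _ _ _ _ _ Cf_f Cb_b n).
- by rewrite -mulrDl -natrD card_unique_preimages_split; exact: T1_large.
Qed.
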